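(* Let $F\colon\mathbb{R}^{n_1}\times\mathbb{R}^{n_2}\to\mathcal{K}_{bcs}(\mathbb{R}^d)$ be locally integrably bounded and assume also that $M_\mathcal{K}^2F$ is locally integrably bounded. Then $M_\mathcal{K}^sF(x)\subset M_\mathcal{K}^1M_\mathcal{K}^2F(x)$ for every $x\in\mathbb{R}^{n_1}\times\mathbb{R}^{n_2}$.
   Context: $\mathcal{K}_{bcs}(\mathbb{R}^d)$ is the collection of compact, convex, symmetric subsets of $\mathbb{R}^d$. For $A\subset\mathbb{R}^d$, $|A|:=\sup\{|a|:a\in A\}$. A set-valued $F\colon\mathbb{R}^n\to\mathcal{K}(\mathbb{R}^d)$ (closed sets) is measurable iff there are measurable $f_k\colon\mathbb{R}^n\to\mathbb{R}^d$ with $F(x)=\overline{\{f_k(x):k\in\mathbb{N}\}}$ for all $x$; it is locally integrably bounded if $|F(x)|\le k(x)$ for all $x$ with some $k\in L^1_{loc}$. $S^0(F)$ is the set of measurable $f\colon\mathbb{R}^n\to\mathbb{R}^d$ with $f(x)\in F(x)$ for all $x$. For a set $E$ of positive finite measure, $\langle F\rangle_E:=\{\fint_E f:f\in S^0(F)\}$ (Aumann average). $\mathcal{R}$ is the set of rectangles $Q_1\times Q_2$ with $Q_i\subset\mathbb{R}^{n_i}$ axis-parallel cubes. The strong convex set-valued maximal operator is $M_\mathcal{K}^sF(x):=\overline{\operatorname{conv}}\big(\{\langle f\rangle_R1_R(x):R\in\mathcal{R},f\in S^0(F)\}\big)$. The one-parameter operator on $\mathbb{R}^m$ is $M_\mathcal{K}G(x):=\overline{\operatorname{conv}}\big(\{\langle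 g\rangle_Q1_Q(x):Q\subset\mathbb{R}^m\text{ cube},g\in S^0(G)\}\big)$, and $M_\mathcal{K}^1F(x_1,x_2):=M_\mathcal{K}(F(\cdot,x_2))(x_1)$, $M_\mathcal{K}^2F(x_1,x_2):=M_\mathcal{K}(F(x_1,\cdot))(x_2)$. *)

From HB Require Import structures.
From mathcomp Require Import all_boot all_order all_algebra.
From mathcomp Require Import all_classical all_reals all_analysis.
Set Implicit Arguments. Unset Strict Implicit. Unset Printing Implicit Defensive.
Import Order.TTheory GRing.Theory Num.Theory.
Import numFieldNormedType.Exports.
Local Open Scope classical_set_scope.
Local Open Scope ring_scope.

(* R^n is modelled by n.-tuple R, with the library's canonical product
   sigma-algebra (generated by the coordinate maps = Borel sigma-algebra). *)

Definition box (R : realType) (n : nat) (a b : n.-tuple R) : set (n.-tuple R) :=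
  [set x | forall i, tnth a i <= tnth x i <= tnth b i].

Definition cube (R : realType) (n : nat) (c : n.-tuple R) (r : R) : set (n.-tuple R) :=
  [set x | forall i, `|tnth x i - tnth c i| <= r].

(* mu is Lebesgue measure on (the Borel sets of) R^n: it is a measure giving
   every box its volume; this determines it uniquely. *)
Definition is_lebesgue (R : realType) (n : nat)
    (mu : {measure set (n.-tuple R) -> \bar R}) : Prop :=
  forall a b : n.-tuple R, (forall i, tnth a i <= tnth b i) ->
    mu (box a b) = (\prod_(i < n) (tnth b i - tnth a i))%:E.

Definition is_lebesgue2 (R : realType) (n1 n2 : nat)
    (mu : {measure set (n1.-tuple R * n2.-tuple R) -> \bar R}) : Prop :=
  forall (a1 b1 : n1.-tuple R) (a2 b2 : n2.-tuple R),
    (forall i, tnth a1 i <= tnth b1 i) -> (forall i, tnth a2 i <= tnth b2 i) ->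
    mu (box a1 b1 `*` box a2 b2) =
      ((\prod_(i < n1) (tnth b1 i - tnth a1 i)) *
       (\prod_(i < n2) (tnth b2 i - tnth a2 i)))%:E.

Definition rects (R : realType) (n1 n2 : nat) : set (set (n1.-tuple R * n2.-tuple R)) :=
  [set Q | exists (c1 : n1.-tuple R) (r1 : R) (c2 : n2.-tuple R) (r2 : R),
      0 < r1 /\ 0 < r2 /\ Q = cube c1 r1 `*` cube c2 r2].

Definition cubes (R : realType) (n : nat) : set (set (n.-tuple R)) :=
  [set Q | exists (c : n.-tuple R) (r : R), 0 < r /\ Q = cube c r].

Definition convex_set (R : realType) (d : nat) (A : set 'rV[R]_d) : Prop :=
  forall x y (t : R), A x -> A y -> 0 <= t <= 1 -> A (t *: x + (1 - t) *: y).

Definition symmetric_set (R : realType) (d : nat) (A : set 'rV[R]_d) : Prop :=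
  forall x, A x -> A (- x).

Definition Kbcs (R : realType) (d : nat) (A : set 'rV[R]_d) : Prop :=
  compact A /\ convex_set A /\ symmetric_set A.

Definition conv_hull (R : realType) (d : nat) (A : set 'rV[R]_d) : set 'rV[R]_d :=
  \bigcap_(C in [set C | convex_set C /\ A `<=` C]) C.

Definition meas_vfun (dT : measure_display) (T : measurableType dT)
    (R : realType) (d : nat) (f : T -> 'rV[R]_d) : Prop :=
  forall i : 'I_d, measurable_fun setT (fun x => f x ord0 i).

Definition meas_setfun (dT : measure_display) (T : measurableType dT)
    (R : realType) (d : nat) (F : T -> set 'rV[R]_d) : Prop :=
  exists fk : nat -> T -> 'rV[R]_d,
    (forall k, meas_vfun (fk k)) /\
    forall x, F x = closure (range (fun k => fk k x)).

Definition S0 (dT : measure_display) (T : measurableType dT)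
    (R : realType) (d : nat) (F : T -> set 'rV[R]_d) : set (T -> 'rV[R]_d) :=
  [set f | meas_vfun f /\ forall x, F x (f x)].

(* local integrable boundedness: |F(x)| <= k(x) with k in L^1_loc
   (integrable on every bounded set of the given family Bnd, which is
   cofinal among bounded sets) *)
Definition loc_int_bdd (dT : measure_display) (T : measurableType dT)
    (R : realType) (d : nat) (mu : {measure set T -> \bar R})
    (Bnd : set (set T)) (F : T -> set 'rV[R]_d) : Prop :=
  exists k : T -> R,
    measurable_fun setT k /\
    (forall B, Bnd B -> mu.-integrable B (fun x => (k x)%:E)) /\
    forall x a, F x a -> `|a| <= k x.

Definition vintegrable (dT : measure_display) (T : measurableType dT)
    (R : realType) (d : nat) (mu : {measure set T -> \bar R})
    (E : set T) (f : T -> 'rV[R]_d) : Prop :=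
  forall i : 'I_d, mu.-integrable E (fun x => (f x ord0 i)%:E).

Definition vavg (dT : measure_display) (T : measurableType dT)
    (R : realType) (d : nat) (mu : {measure set T -> \bar R})
    (E : set T) (f : T -> 'rV[R]_d) : 'rV[R]_d :=
  (fine (mu E))^-1 *: \row_(i < d) fine (\int[mu]_(x in E) (f x ord0 i)%:E).

Definition MK (R : realType) (n d : nat) (mu : {measure set (n.-tuple R) -> \bar R})
    (G : n.-tuple R -> set 'rV[R]_d) (x : n.-tuple R) : set 'rV[R]_d :=
  closure (conv_hull
    [set v | exists Q g, cubes Q /\ S0 G g /\ vintegrable mu Q g /\
                         v = \1_Q x *: vavg mu Q g]).

Definition MK1 (R : realType) (n1 n2 d : nat) (mu1 : {measure set (n1.-tuple R) -> \bar R})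
    (F : n1.-tuple R * n2.-tuple R -> set 'rV[R]_d) (x : n1.-tuple R * n2.-tuple R) :=
  MK mu1 (fun y => F (y, x.2)) x.1.

Definition MK2 (R : realType) (n1 n2 d : nat) (mu2 : {measure set (n2.-tuple R) -> \bar R})
    (F : n1.-tuple R * n2.-tuple R -> set 'rV[R]_d) (x : n1.-tuple R * n2.-tuple R) :=
  MK mu2 (fun y => F (x.1, y)) x.2.

Definition MKs (R : realType) (n1 n2 d : nat)
    (mu : {measure set (n1.-tuple R * n2.-tuple R) -> \bar R})
    (F : n1.-tuple R * n2.-tuple R -> set 'rV[R]_d) (x : n1.-tuple R * n2.-tuple R) :=
  closure (conv_hull
    [set v | exists Q f, @rects R n1 n2 Q /\ S0 F f /\ vintegrable mu Q f /\
                         v = \1_Q x *: vavg mu Q f]).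

(* A generator of M^s_K F(x) is 1_Q(x) <f>_Q for a rectangle Q = Q1 x Q2 and
   an integrable selection f of F.  If x is not in Q it is 0, which is also a
   generator of M^1_K M^2_K F(x): F(p) is convex, symmetric and contains f(p),
   hence contains 0.  If x is in Q, Fubini's theorem gives <f>_Q = <g>_Q1 with
   g(y) = <f(y,.)>_Q2 wherever this section is integrable (almost every y in
   Q1) and g(y) = 0 elsewhere.  Each g(y) is 0 or a generator of
   M^2_K F(y, x2), so g is a measurable selection of M^2_K F(., x2) and <g>_Q1
   is a generator of M^1_K M^2_K F(x).  Taking closed convex hulls gives the
   inclusion.  Fubini applies because mu and the
   product of mu1 and mu2 agree on products of boxes, a pi-system generating the
   Borel sets. *)

From Pilot Require Import Defs.
From HB Require Import structures.
From mathcomp Require Import all_boot all_order all_algebra.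
From mathcomp Require Import all_classical all_reals all_analysis.
From mathcomp Require Import lra measurable_realfun.
Import Order.TTheory GRing.Theory Num.Theory.
Import numFieldNormedType.Exports.
Local Open Scope classical_set_scope.
Local Open Scope ring_scope.
Set Implicit Arguments. Unset Strict Implicit. Unset Printing Implicit Defensive.

Lemma preimage_smallest_sigma_sub (aT rT : Type) (f : aT -> rT)
    (S : set (set aT)) (G : set (set rT)) :
  sigma_algebra setT S -> (forall B, G B -> S (f @^-1` B)) ->
  forall B, <<s G >> B -> S (f @^-1` B).
Proof.
move=> sS GS B GB; rewrite -[_ @^-1` _]setTI.
apply: (smallest_sub (sigma_algebra_image f sS)) GB => C GC.
by rewrite /image_set_system /= setTI; exact: GS.
Qed.

Section generated_product.
Context d1 d2 (T1 : measurableType d1) (T2 : measurableType d2).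
Variables (G1 : set (set T1)) (G2 : set (set T2)).
Variables (c1 : nat -> set T1) (c2 : nat -> set T2).
Hypotheses (mG1 : measurable = <<s G1 >>) (mG2 : measurable = <<s G2 >>).
Hypotheses (G1c1 : forall k, G1 (c1 k)) (G2c2 : forall k, G2 (c2 k)).
Hypotheses (c1T : \bigcup_k c1 k = setT) (c2T : \bigcup_k c2 k = setT).

Let G12 := [set A `*` B | A in G1 & B in G2].

Lemma measurable_prod_generated : (d1, d2).-prod.-measurable = <<s G12 >>.
Proof.
have sG12 : sigma_algebra setT <<s G12 >> := smallest_sigma_algebra _ _.
apply/seteqP; split; last first.
  apply: smallest_sub; first exact: sigma_algebra_measurable.
  move=> _ [A G1A [B G2B <-]]; apply: measurableX.
  - by rewrite mG1; exact: sub_sigma_algebra.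
  - by rewrite mG2; exact: sub_sigma_algebra.
rewrite measurable_prod_measurableType; apply: smallest_sub => // _ [A mA [B mB <-]].
have -> : A `*` B = fst @^-1` A `&` snd @^-1` B by [].
apply: (@measurableI _ (g_sigma_algebraType G12)).
- apply: (preimage_smallest_sigma_sub (G := G1) sG12); last by rewrite -mG1.
  move=> A' G1A'; rewrite (_ : _ @^-1` _ = \bigcup_k (A' `*` c2 k)).
    apply: sigma_algebra_bigcup => k; apply: sub_sigma_algebra.
    by exists A' => //; exists (c2 k).
  by rewrite -setX_bigcupr c2T setXT.
- apply: (preimage_smallest_sigma_sub (G := G2) sG12); last by rewrite -mG2.
  move=> B' G2B'; rewrite (_ : _ @^-1` _ = \bigcup_k (c1 k `*` B')).
    apply: sigma_algebra_bigcup => k; apply: sub_sigma_algebra.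
    by exists (c1 k) => //; exists B'.
  by rewrite -setX_bigcupl c1T setTX.
Qed.

End generated_product.

Section boxes.
Variable R : realType.
Implicit Types n : nat.

Definition boxes n : set (set (n.-tuple R)) := [set box a b | a in setT & b in setT].
Arguments boxes : clear implicits.

Lemma box_le n (a b x : n.-tuple R) : box a b x -> forall i, tnth a i <= tnth b i.
Proof. by move=> abx i; have /andP[/le_trans] := abx i; apply. Qed.

Lemma measurable_box n (a b : n.-tuple R) : measurable (box a b).
Proof.
rewrite (_ : box a b = \bigcap_(i in setT) ((@tnth n R)^~ i @^-1` `[tnth a i, tnth b i])).
  apply: fin_bigcap_measurable => // i _.
  by rewrite -[X in measurable X]setTI; exact: measurable_tnth.
apply/seteqP; split=> x /= abx i; first by move=> _; rewrite /= in_itv; exact: abx.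
by have := abx i I; rewrite /= in_itv.
Qed.

Lemma boxI n (a b a' b' : n.-tuple R) :
  box a b `&` box a' b' =
  box [tuple Order.max (tnth a i) (tnth a' i) | i < n]
      [tuple Order.min (tnth b i) (tnth b' i) | i < n].
Proof.
apply/seteqP; split => x /=.
  move=> [abx abx'] i; rewrite !tnth_mktuple ge_max le_min.
  by case/andP: (abx i) => -> ->; case/andP: (abx' i) => -> ->.
by move=> H; split => i; have := H i; rewrite !tnth_mktuple ge_max le_min;
  case/andP => /andP[? ?] /andP[? ?]; apply/andP.
Qed.

Lemma cube_box n (c : n.-tuple R) r :
  cube c r = box [tuple tnth c i - r | i < n] [tuple tnth c i + r | i < n].
Proof.
by apply/seteqP; split => x /= H i; move: (H i); rewrite !tnth_mktuple ler_distl.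
Qed.

Lemma boxes_cube n (c : n.-tuple R) r : boxes n (cube c r).
Proof. by rewrite cube_box; do !esplit. Qed.

Lemma near_cube0 n (x : n.-tuple R) : \forall k \near \oo, cube (nseq_tuple n 0) k%:R x.
Proof.
exists (Num.bound (\sum_i `|tnth x i|)) => // k /= xk i.
rewrite tnth_nseq subr0.
have x_le_sum : `|tnth x i| <= \sum_j `|tnth x j| by rewrite (bigD1 i) //= lerDl sumr_ge0.
apply: (le_trans x_le_sum); apply: (le_trans (ltW (archi_boundP _))).
  exact: sumr_ge0.
by rewrite ler_nat.
Qed.

Lemma bigcup_cube0 n : \bigcup_k cube (nseq_tuple n (0 : R)) k%:R = setT.
Proof.
by apply/seteqP; split => // x _; have [k ?] := filter_ex (near_cube0 x); exists k.
Qed.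

Lemma boxes_ge_coord n (i : 'I_n) (z : R) : <<s boxes n >> [set x | z <= tnth x i].
Proof.
pose lo k := [tuple if j == i then z else - k%:R | j < n].
rewrite (_ : [set x | _] = \bigcup_k box (lo k) (nseq_tuple n k%:R)).
  apply: sigma_algebra_bigcup => k; apply: sub_sigma_algebra.
  by exists (lo k) => //; eexists.
apply/seteqP; split => x /=; last first.
  by move=> [k _ /(_ i)]; rewrite tnth_mktuple eqxx => /andP[].
move=> zx; have [k k_x] := filter_ex (near_cube0 x); exists k => // j.
have := k_x j; rewrite !tnth_mktuple !tnth_nseq subr0 ler_norml.
by case: eqP => [->|_] /andP[klo ->]; rewrite ?klo ?zx.
Qed.

Lemma measurable_tuple_boxes n : @measurable _ (n.-tuple R) = <<s boxes n >>.
Proof.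
apply/seteqP; split; last first.
  apply: smallest_sub; first exact: sigma_algebra_measurable.
  by move=> _ [a _ [b _ <-]]; exact: measurable_box.
apply: smallest_sub; first exact: smallest_sigma_algebra.
apply: (big_ind (fun S => S `<=` <<s boxes n >>)) => [//|S S' ? ?|i _ _ [B mB <-]].
  by rewrite subUset.
rewrite setTI.
apply: (preimage_smallest_sigma_sub (smallest_sigma_algebra _ _) _
  (G := @RGenCInfty.G R)).
- move=> _ [z ->]; rewrite (_ : _ @^-1` _ = [set x | z <= tnth x i]).
    exact: boxes_ge_coord.
  by apply/seteqP; split => x /=; rewrite in_itv /= andbT.
- by have : (@ocitv R).-sigma.-measurable B := mB; rewrite RGenCInfty.measurableE.
Qed.

End boxes.
Arguments boxes {R} n.

Section lebesgue_cubes.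
Variables (R : realType) (n : nat) (m : {measure set (n.-tuple R) -> \bar R}).
Hypothesis Lm : is_lebesgue m.

Lemma lebesgue_cube (c : n.-tuple R) r : 0 <= r -> m (cube c r) = ((r *+ 2) ^+ n)%:E.
Proof.
move=> r0; rewrite cube_box Lm => [|i]; last by rewrite !tnth_mktuple lerD2l; lra.
rewrite (eq_bigr (fun=> r *+ 2)) ?prodr_const ?card_ord // => i _.
by rewrite !tnth_mktuple mulr2n; lra.
Qed.

Lemma lebesgue_sigma_finite : sigma_finite setT m.
Proof.
exists (fun k => cube (nseq_tuple n 0) k%:R); first by rewrite bigcup_cube0.
move=> k; split; first by rewrite cube_box; exact: measurable_box.
by rewrite lebesgue_cube ?ltry.
Qed.

End lebesgue_cubes.

Section vector_averages.
Context d (T : measurableType d) (R : realType) (n : nat).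
Implicit Types (m : {measure set T -> \bar R}) (E : set T) (f : T -> 'rV[R]_n).

Lemma vintegrable_eq_measure m m' E f : (forall A, measurable A -> m A = m' A) ->
  vintegrable m E f -> vintegrable m' E f.
Proof.
move=> mm' intf i; have /integrableP[mfi finf] := intf i.
apply/integrableP; split => //.
by rewrite -(eq_measure_integral (m1 := m) m') // => A mA _; exact: mm'.
Qed.

Lemma vavg_eq_measure m m' E f : measurable E ->
  (forall A, measurable A -> m A = m' A) -> vavg m E f = vavg m' E f.
Proof.
move=> mE mm'; rewrite /vavg mm' //; congr (_ *: _); apply/rowP => i.
by rewrite !mxE (eq_measure_integral m') // => A mA _; exact: mm'.
Qed.

Lemma vavg0 m E : vavg m E (fun _ => 0 : 'rV[R]_n) = 0.
Proof. by apply/rowP => i; rewrite /vavg !mxE integral0 mulr0. Qed.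

End vector_averages.

Section section_average.
Context d1 d2 (T1 : measurableType d1) (T2 : measurableType d2) (R : realType).
Variables (m1 : {sigma_finite_measure set T1 -> \bar R})
  (m2 : {sigma_finite_measure set T2 -> \bar R}).
Variables (d : nat) (A1 : set T1) (A2 : set T2) (f : T1 * T2 -> 'rV[R]_d).
Hypotheses (mA1 : measurable A1) (mA2 : measurable A2).
Hypothesis intf : vintegrable (m1 \x m2)%E (A1 `*` A2) f.
Local Open Scope ereal_scope.

Definition integrable_sections : set T1 :=
  [set y | A1 y /\ vintegrable m2 A2 (fun z => f (y, z))].

Definition section_avg y : 'rV[R]_d :=
  if y \in integrable_sections then vavg m2 A2 (fun z => f (y, z)) else 0%R.

Let fi i p := (f p ord0 i)%:E.
Let hi i := fi i \_ (A1 `*` A2).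
Let Phi i y := \int[m2]_z hi i (y, z).

Let hiE i y z : A1 y -> hi i (y, z) = ((fun z => fi i (y, z)) \_ A2) z.
Proof.
move=> A1y; rewrite /hi !patchE.
by congr (if _ then _ else _); apply/idP/idP => /set_mem H; apply/mem_set => //; case: H.
Qed.

Let hi0 i y z : ~ A1 y -> hi i (y, z) = 0.
Proof. by move=> A1y; rewrite /hi patchE ifF //; apply/negbTE/negP => /set_mem[]. Qed.

Let integrable_hi i : (m1 \x m2).-integrable setT (hi i).
Proof. by apply/(integrable_mkcond _ (measurableX mA1 mA2)); exact: intf. Qed.

Let measurable_hi i : measurable_fun setT (hi i).
Proof. exact: measurable_int (integrable_hi i). Qed.

Let PhiE i y : A1 y -> Phi i y = \int[m2]_(z in A2) fi i (y, z).
Proof.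
by move=> A1y; rewrite [RHS]integral_mkcond; apply: eq_integral => z _; rewrite hiE.
Qed.

Let Phi0 i y : ~ A1 y -> Phi i y = 0.
Proof.
by move=> A1y; rewrite /Phi (eq_integral (cst 0)) ?integral0 // => z _; rewrite hi0.
Qed.

Let section_integrableE i y : A1 y ->
  m2.-integrable A2 (fun z => fi i (y, z)) <-> \int[m2]_z `|hi i (y, z)| < +oo.
Proof.
move=> A1y; rewrite (integrable_mkcond _ mA2).
rewrite (_ : _ \_ A2 = fun z => hi i (y, z)); last by apply/funext => z; rewrite hiE.
split; first by case/integrableP.
by move=> ltoo; apply/integrableP; split => //; exact: measurable_fun_pair2.
Qed.

Lemma measurable_integrable_sections : measurable integrable_sections.
Proof.
rewrite (_ : integrable_sections =
    A1 `&` \bigcap_(i in setT) (setT `&` [set y | \int[m2]_z `|hi i (y, z)| < +oo])).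
  apply: measurableI => //; apply: fin_bigcap_measurable => // i _.
  apply: emeasurable_fun_infty_o => //.
  apply: (measurable_fun_fubini_tonelli_F (fun p => `|hi i p|)) => //.
  exact: measurableT_comp (measurable_hi i).
apply/seteqP; split => y /= [A1y secy]; split => // i.
  by move=> _; split => //; apply/section_integrableE => //; exact: secy.
by apply/section_integrableE => //; have [] := secy i I.
Qed.

Let ae_integrable_sections : {ae m1, forall y, A1 y -> integrable_sections y}.
Proof.
have /filter_forall :
    forall i, {ae m1, forall y, m2.-integrable setT (fun z => hi i (y, z))}.
  by move=> i; exact: ae_integrable1.
apply: filterS => y secy A1y; split => // i.
by apply/section_integrableE => //; case/integrableP: (secy i).
Qed.

Let section_avg_coord y i : section_avg y ord0 i =
  (\1_integrable_sections y * ((fine (m2 A2))^-1 * fine (Phi i y)))%R.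
Proof.
rewrite /section_avg indicE; case: ifPn => [/set_mem[A1y _]|_]; last by rewrite mxE mul0r.
by rewrite mul1r /vavg !mxE PhiE.
Qed.

Lemma meas_vfun_section_avg : meas_vfun section_avg.
Proof.
move=> i; rewrite (_ : (fun y => _) = fun y => (\1_integrable_sections y *
    ((fine (m2 A2))^-1 * fine (Phi i y)))%R); last first.
  by apply/funext => y; rewrite section_avg_coord.
apply: measurable_funM; first exact: measurable_indic measurable_integrable_sections.
apply: measurable_funM => //; apply: measurableT_comp => //.
exact: measurable_fubini_F (integrable_hi i).
Qed.

Let integrable_Phi i : m1.-integrable A1 (Phi i).
Proof.
exact: integrableS measurableT mA1 (subsetT _) (integrable_fubini_F (integrable_hi i)).
Qed.

Lemma vintegrable_section_avg : vintegrable m1 A1 section_avg.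
Proof.
move=> i; apply: (le_integrable mA1 _ _
  (integrableZl mA1 ((fine (m2 A2))^-1)%R (integrable_Phi i))).
  by apply/measurable_EFinP/measurable_funTS; exact: meas_vfun_section_avg.
move=> y _; rewrite section_avg_coord indicE.
case: (y \in integrable_sections); last by rewrite mul0r abse0 abse_ge0.
by rewrite mul1r; case: (Phi i y) => [r| |] //=; rewrite mulr0 normr0 abse_ge0.
Qed.

Let integral_Phi i :
  \int[m1]_(y in A1) Phi i y = \int[m1 \x m2]_(p in A1 `*` A2) fi i p.
Proof.
rewrite [in RHS]integral_mkcond -(integral12_prod_meas1 (integrable_hi i)).
rewrite [in LHS]integral_mkcond.
apply: eq_integral => y _; rewrite patchE; case: ifPn => // /negP A1y.
by rewrite -[RHS]/(Phi i y) Phi0 // => /mem_set.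
Qed.

Lemma integral_section_avg i :
  \int[m1]_(y in A1) (section_avg y ord0 i)%:E =
  ((fine (m2 A2))^-1)%:E * \int[m1 \x m2]_(p in A1 `*` A2) (f p ord0 i)%:E.
Proof.
rewrite -integral_Phi -integralZl //; apply: ae_eq_integral => //.
- by apply/measurable_EFinP/measurable_funTS; exact: meas_vfun_section_avg.
- apply: emeasurable_funM => //; apply: measurable_funTS.
  exact: measurable_fubini_F (integrable_hi i).
apply: filterS ae_integrable_sections => y secy A1y.
have fin_Phi : Phi i y \is a fin_num.
  by rewrite PhiE //; apply: integrable_fin_num => //; exact: (secy A1y).2.
by rewrite section_avg_coord indicE (mem_set (secy A1y)) mul1r EFinM fineK.
Qed.

Lemma vavg_section_avg : m1 A1 \is a fin_num -> m2 A2 \is a fin_num ->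
  vavg m1 A1 section_avg = vavg (m1 \x m2) (A1 `*` A2) f.
Proof.
move=> finA1 finA2; apply/rowP => i; rewrite /vavg !mxE integral_section_avg.
have -> : fine ((m1 \x m2) (A1 `*` A2)) = fine (m1 A1 * m2 A2).
  by rewrite product_measure1E.
rewrite [in RHS]fineM // invfM -mulrA; congr (_ * _)%R.
have fin_int := integrable_fin_num (measurableX mA1 mA2) (intf i).
by rewrite fineM.
Qed.

End section_average.

Section convex_maximal.
Variables (R : realType) (d : nat).
Implicit Types A B : set 'rV[R]_d.

Lemma convex_symmetric_set0 A a : Defs.convex_set A -> symmetric_set A -> A a -> A 0.
Proof.
move=> cvxA symA Aa; have := cvxA a (- a) 2^-1 Aa (symA _ Aa).
rewrite (_ : 1 - 2^-1 = 2^-1 :> R); last lra.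
by rewrite scalerN addrN; apply; apply/andP; split; lra.
Qed.

Lemma sub_conv_hull A : A `<=` conv_hull A.
Proof. by move=> x Ax C [_ AsubC]; exact: AsubC. Qed.

Lemma conv_hullS A B : A `<=` B -> conv_hull A `<=` conv_hull B.
Proof. by move=> AB x Ax C [cvxC BC]; apply: Ax; split => //; exact: subset_trans BC. Qed.

Definition MK_generators n (mu : {measure set (n.-tuple R) -> \bar R})
    (G : n.-tuple R -> set 'rV[R]_d) (x : n.-tuple R) : set 'rV[R]_d :=
  [set v | exists Q g, cubes Q /\ S0 G g /\ vintegrable mu Q g /\
                       v = \1_Q x *: vavg mu Q g].

Definition MKs_generators n1 n2
    (mu : {measure set (n1.-tuple R * n2.-tuple R) -> \bar R})
    (F : n1.-tuple R * n2.-tuple R -> set 'rV[R]_d) (x : n1.-tuple R * n2.-tuple R) :=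
  [set v | exists Q f, @rects R n1 n2 Q /\ S0 F f /\ vintegrable mu Q f /\
                       v = \1_Q x *: vavg mu Q f].

Lemma MK_generators0 n (mu : {measure set (n.-tuple R) -> \bar R}) G x :
  (forall y, G y 0) -> MK_generators mu G x 0.
Proof.
move=> G0; have sel0 : S0 G (fun _ => 0) by split.
have int0 : vintegrable mu (cube x 1) (fun _ => 0 : 'rV[R]_d).
  move=> i; rewrite (_ : (fun _ => _) = cst 0); first exact: integrable0.
  by apply/funext => y; rewrite mxE.
by exists (cube x 1), (fun _ => 0); rewrite vavg0 scaler0; split => //; exists x, 1.
Qed.

Lemma MK_generators_sub n (mu : {measure set (n.-tuple R) -> \bar R}) G x :
  MK_generators mu G x `<=` MK mu G x.
Proof. by move=> v genv; apply: subset_closure; exact: sub_conv_hull. Qed.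

End convex_maximal.

Section lebesgue_product.
Variables (R : realType) (n1 n2 : nat).
Variables (mu1 : {measure set (n1.-tuple R) -> \bar R})
  (mu2 : {measure set (n2.-tuple R) -> \bar R})
  (mu : {measure set (n1.-tuple R * n2.-tuple R) -> \bar R}).
Hypotheses (L1 : is_lebesgue mu1) (L2 : is_lebesgue mu2) (L : is_lebesgue2 mu).

(* Copies of mu1 and mu2 carrying the sigma-finite structure required by the
   product measure. *)
Definition sfmu1 := mu1 : set (n1.-tuple R) -> \bar R.
Definition sfmu2 := mu2 : set (n2.-tuple R) -> \bar R.
HB.instance Definition _ := Measure.on sfmu1.
HB.instance Definition _ := Measure.on sfmu2.
HB.instance Definition _ :=
  Measure_isSigmaFinite.Build _ _ _ sfmu1 (lebesgue_sigma_finite L1).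
HB.instance Definition _ :=
  Measure_isSigmaFinite.Build _ _ _ sfmu2 (lebesgue_sigma_finite L2).

Lemma lebesgue2_product A : measurable A -> mu A = (sfmu1 \x sfmu2)%E A.
Proof.
pose cube0 n k := cube (nseq_tuple n (0 : R)) k%:R.
move: A; apply: (measure_unique [set A `*` B | A in boxes n1 & B in boxes n2]
  (fun k => cube0 n1 k `*` cube0 n2 k)).
- apply: (measurable_prod_generated (c1 := cube0 n1) (c2 := cube0 n2));
    do ?[exact: measurable_tuple_boxes | exact: bigcup_cube0 |
         move=> k; exact: boxes_cube].
- move=> X Y [A1 [a1 _ [b1 _ <-]] [A2 [a2 _ [b2 _ <-]] <-]].
  move=> [A1' [a1' _ [b1' _ <-]] [A2' [a2' _ [b2' _ <-]] <-]].
  by rewrite -setXI !boxI; do !esplit.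
- move=> k; exists (cube0 n1 k); first exact: boxes_cube.
  by exists (cube0 n2 k); first exact: boxes_cube.
- apply/seteqP; split => // p _.
  have [k [? ?]] := filter_ex (filterI (near_cube0 p.1) (near_cube0 p.2)).
  by exists k.
- move=> _ [A1 [a1 _ [b1 _ <-]] [A2 [a2 _ [b2 _ <-]] <-]].
  have [->|/set0P[p [/box_le le1 /box_le le2]]] := eqVneq (box a1 b1 `*` box a2 b2) set0.
    by rewrite !measure0.
  rewrite L // [RHS]product_measure1E /=; try exact: measurable_box.
  by rewrite /sfmu1 /sfmu2 L1 // L2 // EFinM.
- move=> k; rewrite /cube0 (cube_box (nseq_tuple n1 0)) (cube_box (nseq_tuple n2 0)).
  by rewrite L ?ltry // => i; rewrite !tnth_mktuple lerD2l; have := ler0n R k; lra.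
Qed.

Variables (d : nat) (F : n1.-tuple R * n2.-tuple R -> set 'rV[R]_d).
Hypothesis KF : forall p, Kbcs (F p).

Lemma MKs_generators_sub x :
  MKs_generators mu F x `<=` MK_generators mu1 (fun y => MK2 mu2 F (y, x.2)) x.1.
Proof.
move=> _ [_ [f [[c1 [r1 [c2 [r2 [r1_gt0 [r2_gt0 ->]]]]]] [Sf [intf ->]]]]].
have F0 p : F p 0.
  by have [_ [cvxF symF]] := KF p; exact: convex_symmetric_set0 cvxF symF (Sf.2 p).
have MK2F0 p : MK2 mu2 F p 0 by apply: MK_generators_sub; exact: MK_generators0.
have [[Q1x Q2x]|Qx] := pselect ((cube c1 r1 `*` cube c2 r2) x); last first.
  by rewrite indicE memNset // scale0r; exact: MK_generators0.
set Q1 := cube c1 r1; set Q2 := cube c2 r2.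
have mQ1 : measurable Q1 by rewrite /Q1 cube_box; exact: measurable_box.
have mQ2 : measurable Q2 by rewrite /Q2 cube_box; exact: measurable_box.
have intf' : vintegrable (sfmu1 \x sfmu2)%E (Q1 `*` Q2) f.
  exact: vintegrable_eq_measure lebesgue2_product intf.
exists Q1, (section_avg sfmu2 Q1 Q2 f); split; first by exists c1, r1.
split; first split.
- exact: meas_vfun_section_avg mQ1 mQ2 intf'.
- move=> y; rewrite /section_avg; case: ifPn => [/set_mem[_ secy]|_]; last exact: MK2F0.
  apply: MK_generators_sub; exists Q2, (fun z => f (y, z)); split; first by exists c2, r2.
  split; first by split => [i|z]; [exact: measurable_fun_pair2 (Sf.1 i) | exact: Sf.2].
  split; first exact: vintegrable_eq_measure secy.
  by rewrite indicE mem_set // scale1r (vavg_eq_measure (m' := mu2)).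
split; first exact: vintegrable_eq_measure (vintegrable_section_avg mQ1 mQ2 intf').
rewrite !indicE !mem_set // !scale1r (vavg_eq_measure (m' := sfmu1)) //.
rewrite vavg_section_avg //.
- rewrite (vavg_eq_measure (m' := mu)) //; first exact: measurableX.
  by move=> A /lebesgue2_product.
- by rewrite /sfmu1 /Q1 lebesgue_cube // ltW.
- by rewrite /sfmu2 /Q2 lebesgue_cube // ltW.
Qed.

Lemma MKs_sub_MK1_MK2 x : MKs mu F x `<=` MK1 mu1 (MK2 mu2 F) x.
Proof. by apply: closureS; apply: conv_hullS; exact: MKs_generators_sub. Qed.

End lebesgue_product.

Theorem lemma3p1 (R : realType) (n1 n2 d : nat)
    (mu1 : {measure set (n1.-tuple R) -> \bar R})
    (mu2 : {measure set (n2.-tuple R) -> \bar R})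
    (mu : {measure set (n1.-tuple R * n2.-tuple R) -> \bar R})
    (F : n1.-tuple R * n2.-tuple R -> set 'rV[R]_d) :
  is_lebesgue mu1 -> is_lebesgue mu2 -> is_lebesgue2 mu ->
  (forall x, Kbcs (F x)) ->
  meas_setfun F ->
  loc_int_bdd mu (@rects R n1 n2) F ->
  loc_int_bdd mu (@rects R n1 n2) (MK2 mu2 F) ->
  forall x, MKs mu F x `<=` MK1 mu1 (MK2 mu2 F) x.
Proof.
by move=> L1 L2 L KF _ _ _; exact: MKs_sub_MK1_MK2.
Qed.
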